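(* Let $f:\mathbb{R}^d\to\mathbb{R}$, let $p_u:\mathbb{R}^d\to[0,\infty)$, and let $q_+,q_-$ be probability density functions on $\mathbb{R}^d$. Let $n_+,n_-\ge1$ be integers and let $\boldsymbol{x}_{1+},\dots,\boldsymbol{x}_{n_++}$ and $\boldsymbol{x}_{1-},\dots,\boldsymbol{x}_{n_--}$ be points with $q_+(\boldsymbol{x}_{i+})>0$ and $q_-(\boldsymbol{x}_{i-})>0$ (e.g. samples drawn from $q_+$ and $q_-$ respectively). Write $S_+=\{\boldsymbol{x}_{i+}: 1\le i\le n_+\}$, $S_-=\{\boldsymbol{x}_{i-}:1\le i\le n_-\}$, and define for $\mu\in\mathbb{R}$ $$\Psi_{n_+,n_-}(\mu)=\frac1{n_+}\sum_{i=1}^{n_+}\frac{(f(\boldsymbol{x}_{i+})-\mu)_+p_u(\boldsymbol{x}_{i+})}{q_+(\boldsymbol{x}_{i+})}-\frac1{n_-}\sum_{i=1}^{n_-}\frac{(f(\boldsymbol{x}_{i-})-\mu)_-p_u(\boldsymbol{x}_{i-})}{q_-(\boldsymbol{x}_{i-})}.$$ Assume that $\max_{\boldsymbol{x}\in S_+}p_u(\boldsymbol{x})>0$ and $\max_{\boldsymbol{x}\in S_-}p_u(\boldsymbol{x})>0$. Then there exists $\hat\mu\in\mathbb{R}$ with $\Psi_{n_+,n_-}(\hat\mu)=0$. Moreover, let $\overline{f}=\max\{f(\boldsymbol{x}): \boldsymbol{x}\in S_+,\ p_u(\boldsymbol{x})>0\}$ and $\underline{f}=\min\{f(\boldsymbol{x}):\boldsymbol{x}\in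 S_-,\ p_u(\boldsymbol{x})>0\}$. If $\overline{f}>\underline{f}$, then there is at most one solution $\mu$ of $\Psi_{n_+,n_-}(\mu)=0$.
   Context: For $a\in\mathbb{R}$, $(a)_+=\max(a,0)$ and $(a)_-=\max(-a,0)$, so $a=(a)_+-(a)_-$. Here $p_u$ plays the role of an unnormalized probability density. *)

From HB Require Import structures.
From mathcomp Require Import all_boot all_order all_algebra.
From mathcomp Require Import all_classical all_reals all_analysis.
Set Implicit Arguments. Unset Strict Implicit. Unset Printing Implicit Defensive.
Import Order.TTheory GRing.Theory Num.Theory.
Local Open Scope ring_scope.

(* Points of R^d are represented as d.-tuples of reals; d.-tuple R carries the
   product sigma-algebra from MathComp-Analysis (measurable_structure.v). *)

(* Lebesgue integral over R^d of a nonnegative function, written as the iterated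
   integral over the coordinates (equal to the integral w.r.t. the d-dimensional
   Lebesgue measure for nonnegative measurable functions, by Tonelli). *)
Fixpoint lebesgue_int_Rd (R : realType) (d : nat) :
    (d.-tuple R -> \bar R) -> \bar R :=
  match d with
  | 0 => fun g => g [tuple]
  | d'.+1 => fun g =>
      (\int[@lebesgue_measure R]_(x in [set: R])
         lebesgue_int_Rd (fun t : d'.-tuple R => g [tuple of x :: t]))%E
  end.

Definition is_pdf (R : realType) (d : nat) (q : d.-tuple R -> R) : Prop :=
  [/\ forall x, 0 <= q x,
      measurable_fun [set: d.-tuple R] q &
      lebesgue_int_Rd (fun x => (q x)%:E) = 1%E ].

Definition pos_part (R : realType) (a : R) : R := Num.max a 0.
Definition neg_part (R : realType) (a : R) : R := Num.max (- a) 0.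

Definition Psi (R : realType) (d np nm : nat)
    (f pu qp qm : d.-tuple R -> R)
    (xp : 'I_np -> d.-tuple R) (xm : 'I_nm -> d.-tuple R) (mu : R) : R :=
  (np%:R)^-1 * \sum_(i < np) pos_part (f (xp i) - mu) * pu (xp i) / qp (xp i)
  - (nm%:R)^-1 * \sum_(i < nm) neg_part (f (xm i) - mu) * pu (xm i) / qm (xm i).

From HB Require Import structures.
From mathcomp Require Import all_boot all_order all_algebra.
From mathcomp Require Import all_classical all_reals all_analysis.
Import Order.TTheory GRing.Theory Num.Theory.
Import numFieldNormedType.Exports.
Set Implicit Arguments. Unset Strict Implicit.
Local Open Scope ring_scope.

(* Write Psi(mu) = A(mu) - B(mu), where A(mu) is a nonnegative combination of
   the (f(x_i+) - mu)_+ and B(mu) one of the (f(x_i-) - mu)_-.  Both are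
   continuous, A is nonincreasing and vanishes above every f(x_i+), B is
   nondecreasing and vanishes below every f(x_i-); the intermediate value
   theorem gives a root.  At a root mu, B(mu) > 0: either mu > flow, or
   mu <= flow < fbar and then B(mu) = A(mu) > 0.  Wherever B is positive it is
   strictly increasing, so Psi is strictly larger to the left of any root. *)

Section Sums.
Variable R : realType.

Lemma continuous_sum (I : finType) (g : I -> R -> R) :
  (forall i, continuous (g i)) -> continuous (fun x => \sum_i g i x).
Proof.
move=> g_cont; rewrite -fct_sumE.
apply: (big_ind (fun h : R -> R => continuous h)) => [|h k h_cont k_cont|i _].
- exact: cst_continuous.
- by move=> x; apply: continuousD; [exact: h_cont | exact: k_cont].
- by move=> x; apply: g_cont.
Qed.

Lemma ltr_sum_le_lt (I : finType) (F G : I -> R) (j : I) :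
  (forall i, F i <= G i) -> F j < G j -> \sum_i F i < \sum_i G i.
Proof.
move=> leFG ltFGj; rewrite (bigD1 j) //= [ltRHS](bigD1 j) //=.
by apply: ltr_leD ltFGj _; apply: ler_sum => i _.
Qed.

End Sums.

Section PositivePart.
Variable R : realType.
Implicit Types a b : R.

Lemma pos_part_ge0 a : 0 <= pos_part a.
Proof. by rewrite /pos_part le_max lexx orbT. Qed.

Lemma pos_part_eq0 a : a <= 0 -> pos_part a = 0.
Proof. exact: max_r. Qed.

Lemma pos_part_le : {homo @pos_part R : a b / a <= b}.
Proof. by move=> a b le_ab; apply: le_max2. Qed.

Lemma pos_part_lt a b : a < b -> 0 < b -> pos_part a < pos_part b.
Proof.
by move=> lt_ab b_gt0; rewrite /pos_part (max_l (ltW b_gt0)) gt_max lt_ab.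
Qed.

Lemma pos_part_gt0 a : (0 < pos_part a) = (0 < a).
Proof. by rewrite /pos_part lt_max ltxx orbF. Qed.

Lemma pos_part_continuous : continuous (@pos_part R).
Proof. by move=> x; apply: continuous_max; [exact: cvg_id | exact: cvg_cst]. Qed.

End PositivePart.

Section WeightedParts.
Variables (R : realType) (I : finType) (c w : I -> R).
Hypothesis w_ge0 : forall i, 0 <= w i.

Definition pos_sum (mu : R) : R := \sum_i pos_part (c i - mu) * w i.
Definition neg_sum (mu : R) : R := \sum_i neg_part (c i - mu) * w i.

Lemma pos_sum_ge0 mu : 0 <= pos_sum mu.
Proof. by apply: sumr_ge0 => i _; rewrite mulr_ge0 ?pos_part_ge0. Qed.

Lemma pos_sum_eq0 mu : (forall i, c i <= mu) -> pos_sum mu = 0.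
Proof.
by move=> c_le; apply: big1 => i _; rewrite pos_part_eq0 ?mul0r // subr_le0.
Qed.

Lemma pos_sum_noninc : {homo pos_sum : m1 m2 /~ m1 <= m2}.
Proof.
move=> m1 m2 le_m12; apply: ler_sum => i _.
by rewrite ler_wpM2r // pos_part_le // lerB.
Qed.

Lemma pos_sum_gt0 mu j : 0 < w j -> mu < c j -> 0 < pos_sum mu.
Proof.
move=> w_gt0 lt_mu; apply: le_lt_trans (ltr_sum_le_lt (F := fun=> 0) (j := j) _ _).
- by rewrite big1.
- by move=> i; rewrite mulr_ge0 ?pos_part_ge0.
- by rewrite mulr_gt0 // pos_part_gt0 subr_gt0.
Qed.

Lemma pos_sum_gt0P mu : 0 < pos_sum mu -> exists2 j, 0 < w j & mu < c j.
Proof.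
have term_ge0 i : 0 <= pos_part (c i - mu) * w i by rewrite mulr_ge0 ?pos_part_ge0.
move=> /lt0r_neq0/eqP/(psumr_neq0P (fun i _ => term_ge0 i)) [j /andP[_ term_gt0]].
have part_gt0 : 0 < pos_part (c j - mu).
  by rewrite lt_def pos_part_ge0 andbT; apply: contraTneq term_gt0 => ->; rewrite mul0r ltxx.
have w_gt0 : 0 < w j.
  by rewrite lt_def w_ge0 andbT; apply: contraTneq term_gt0 => ->; rewrite mulr0 ltxx.
by exists j; rewrite // -subr_gt0 -pos_part_gt0.
Qed.

Lemma pos_sum_lt m1 m2 : m1 < m2 -> 0 < pos_sum m1 -> pos_sum m2 < pos_sum m1.
Proof.
move=> lt_m12 /pos_sum_gt0P [j w_gt0 lt_m1c].
apply: (ltr_sum_le_lt (j := j)) => [i|].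
  by rewrite ler_wpM2r // pos_part_le // lerB // ltW.
by rewrite ltr_pM2r // pos_part_lt ?subr_gt0 // ltrD2l ltrN2.
Qed.

Lemma pos_sum_continuous : continuous pos_sum.
Proof.
apply: continuous_sum => i mu.
apply: (continuousM (s := fun mu => pos_part (c i - mu)) (t := fun=> w i)); last exact: cvg_cst.
apply: (continuous_comp (f := fun mu => c i - mu)); last exact: pos_part_continuous.
by apply: continuousB; [exact: cvg_cst | exact: cvg_id].
Qed.

End WeightedParts.

Section NegativeSums.
Variables (R : realType) (I : finType) (c w : I -> R).
Hypothesis w_ge0 : forall i, 0 <= w i.

Lemma neg_sumE mu : neg_sum c w mu = pos_sum (fun i => - c i) w (- mu).
Proof. by apply: eq_bigr => i _; rewrite /neg_part opprB opprK addrC. Qed.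

Lemma neg_sum_ge0 mu : 0 <= neg_sum c w mu.
Proof. by rewrite neg_sumE pos_sum_ge0. Qed.

Lemma neg_sum_eq0 mu : (forall i, mu <= c i) -> neg_sum c w mu = 0.
Proof. by move=> le_c; rewrite neg_sumE pos_sum_eq0 // => i; rewrite lerN2. Qed.

Lemma neg_sum_gt0 mu j : 0 < w j -> c j < mu -> 0 < neg_sum c w mu.
Proof. by move=> w_gt0 lt_c; rewrite neg_sumE (pos_sum_gt0 _ w_gt0) // ltrN2. Qed.

Lemma neg_sum_lt m1 m2 :
  m1 < m2 -> 0 < neg_sum c w m2 -> neg_sum c w m1 < neg_sum c w m2.
Proof. by rewrite !neg_sumE -ltrN2; exact: pos_sum_lt. Qed.

Lemma neg_sum_continuous : continuous (neg_sum c w).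
Proof.
have -> : neg_sum c w = pos_sum (fun i => - c i) w \o -%R.
  by apply: funext => mu; rewrite neg_sumE.
move=> mu; apply: continuous_comp; last exact: pos_sum_continuous.
exact: opp_continuous.
Qed.

End NegativeSums.

Section Balance.
Variables (R : realType) (I J : finType) (cp wp : I -> R) (cm wm : J -> R).
Variables a b : R.
Hypotheses (wp_ge0 : forall i, 0 <= wp i) (wm_ge0 : forall j, 0 <= wm j).

Definition balance (mu : R) : R := a * pos_sum cp wp mu - b * neg_sum cm wm mu.

Lemma balance_continuous : continuous balance.
Proof.
move=> mu; apply: (continuousB (f := fun mu => a * pos_sum cp wp mu)
                              (g := fun mu => b * neg_sum cm wm mu)).
- by apply: (continuousM (s := fun=> a)); [exact: cvg_cst | exact: pos_sum_continuous].
- by apply: (continuousM (s := fun=> b)); [exact: cvg_cst | exact: neg_sum_continuous].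
Qed.

Lemma balance_root : 0 <= a -> 0 <= b -> exists mu, balance mu = 0.
Proof.
move=> a_ge0 b_ge0.
pose lo := \big[Num.min/0]_j cm j; pose hi := \big[Num.max/0]_i cp i.
have lo_le_hi : lo <= hi by apply: (le_trans (bigmin_le_id _ _ _ _)) (bigmax_ge_id _ _ _ _).
have balance_lo : 0 <= balance lo.
  by rewrite /balance neg_sum_eq0 ?mulr0 ?subr0 ?mulr_ge0 ?pos_sum_ge0 // => j; apply: bigmin_le.
have balance_hi : balance hi <= 0.
  rewrite /balance pos_sum_eq0 ?mulr0 ?sub0r ?oppr_le0 ?mulr_ge0 ?neg_sum_ge0 //.
  by move=> i; apply: le_bigmax.
have [|mu _ root] := IVT (v := 0) lo_le_hi (continuous_subspaceT balance_continuous).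
  by rewrite ge_min le_max balance_lo balance_hi orbT.
by exists mu.
Qed.

Lemma balance_gt_left_of_root i j m1 m2 : 0 < a -> 0 < b ->
  0 < wp i -> 0 < wm j -> cm j < cp i ->
  m1 < m2 -> balance m2 = 0 -> balance m2 < balance m1.
Proof.
move=> a_gt0 b_gt0 wp_gt0 wm_gt0 lt_cmp lt_m12 root.
have neg_gt0 : 0 < neg_sum cm wm m2.
  have [lt_cm|le_m2] := ltP (cm j) m2; first exact: neg_sum_gt0 wm_gt0 lt_cm.
  have pos_gt0 : 0 < a * pos_sum cp wp m2.
    by rewrite mulr_gt0 // (pos_sum_gt0 _ wp_gt0) // (le_lt_trans le_m2).
  by move: root pos_gt0 => /eqP; rewrite subr_eq0 => /eqP ->; rewrite pmulr_rgt0.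
apply: ler_ltB.
  by rewrite (ler_pM2l a_gt0); apply: (pos_sum_noninc _ wp_ge0); exact: ltW.
by rewrite (ltr_pM2l b_gt0); apply: neg_sum_lt.
Qed.

Lemma balance_root_unique i j mu1 mu2 : 0 < a -> 0 < b ->
  0 < wp i -> 0 < wm j -> cm j < cp i ->
  balance mu1 = 0 -> balance mu2 = 0 -> mu1 = mu2.
Proof.
move=> a_gt0 b_gt0 wp_gt0 wm_gt0 lt_cmp root1 root2.
have lt_root := balance_gt_left_of_root a_gt0 b_gt0 wp_gt0 wm_gt0 lt_cmp.
case: (ltgtP mu1 mu2) => // lt_mu.
- by have := lt_root _ _ lt_mu root2; rewrite root1 root2 ltxx.
- by have := lt_root _ _ lt_mu root1; rewrite root1 root2 ltxx.
Qed.

End Balance.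

Lemma Psi_balance (R : realType) (d np nm : nat) (f pu qp qm : d.-tuple R -> R)
    (xp : 'I_np -> d.-tuple R) (xm : 'I_nm -> d.-tuple R) (mu : R) :
  Psi f pu qp qm xp xm mu =
  balance (fun i => f (xp i)) (fun i => pu (xp i) / qp (xp i))
          (fun j => f (xm j)) (fun j => pu (xm j) / qm (xm j))
          np%:R^-1 nm%:R^-1 mu.
Proof.
by congr (_ * _ - _ * _); apply: eq_bigr => i _; rewrite mulrA.
Qed.

Theorem proposition1 (R : realType) (d : nat)
    (f pu qp qm : d.-tuple R -> R)
    (np nm : nat) (xp : 'I_np -> d.-tuple R) (xm : 'I_nm -> d.-tuple R) :
  (forall x, 0 <= pu x) ->
  is_pdf qp -> is_pdf qm ->
  (1 <= np)%N -> (1 <= nm)%N ->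
  (forall i, 0 < qp (xp i)) -> (forall i, 0 < qm (xm i)) ->
  (* max over S_+ of p_u is > 0, likewise over S_- *)
  (exists i, 0 < pu (xp i)) -> (exists i, 0 < pu (xm i)) ->
  (exists muhat : R, Psi f pu qp qm xp xm muhat = 0) /\
  (forall fbar flow : R,
     (* fbar = max { f x | x in S_+, p_u x > 0 } *)
     (exists i, 0 < pu (xp i) /\ f (xp i) = fbar) ->
     (forall i, 0 < pu (xp i) -> f (xp i) <= fbar) ->
     (* flow = min { f x | x in S_-, p_u x > 0 } *)
     (exists i, 0 < pu (xm i) /\ f (xm i) = flow) ->
     (forall i, 0 < pu (xm i) -> flow <= f (xm i)) ->
     flow < fbar ->
     forall mu1 mu2 : R,
       Psi f pu qp qm xp xm mu1 = 0 -> Psi f pu qp qm xp xm mu2 = 0 ->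
       mu1 = mu2).
Proof.
move=> pu_ge0 _ _ np_gt0 nm_gt0 qp_gt0 qm_gt0 _ _.
have wp_ge0 i : 0 <= pu (xp i) / qp (xp i) by rewrite divr_ge0 // ltW.
have wm_ge0 j : 0 <= pu (xm j) / qm (xm j) by rewrite divr_ge0 // ltW.
have inv_gt0 n : (1 <= n)%N -> 0 < n%:R^-1 :> R by move=> n_gt0; rewrite invr_gt0 ltr0n.
split.
  have [mu root] := balance_root (fun i => f (xp i)) (fun j => f (xm j))
    wp_ge0 wm_ge0 (ltW (inv_gt0 _ np_gt0)) (ltW (inv_gt0 _ nm_gt0)).
  by exists mu; rewrite Psi_balance.
move=> _ _ [i [pu_i <-]] _ [j [pu_j <-]] _ lt_f mu1 mu2; rewrite !Psi_balance.
apply: (balance_root_unique wp_ge0 wm_ge0 (inv_gt0 _ np_gt0) (inv_gt0 _ nm_gt0) _ _ lt_f).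
  by rewrite divr_gt0.
by rewrite divr_gt0.
Qed.
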